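(* For every positive integer $n$, $$\big((\mathrm{Id}\cdot\varphi)\ast\delta\big)(n)=n\,\delta(n)-\big(\mathrm{Id}\ast(\varphi\delta)\big)(n),$$ where $\mathrm{Id}\cdot\varphi$ is $n\mapsto n\varphi(n)$ and $\varphi\delta$ is the pointwise product.
   Context: The arithmetic derivative $\delta$ is defined by $\delta(p)=1$ for every prime $p$ and $\delta(mn)=m\delta(n)+n\delta(m)$ for all positive integers $m,n$; equivalently $\delta(1)=0$ and $\delta(n)=n\sum_{p^\alpha\| n}\alpha/p$. $\mathrm{Id}(n)=n$, $\varphi$ is Euler's totient function. The Dirichlet convolution is $(u\ast v)(n)=\sum_{d\mid n}u(d)v(n/d)$. *)

From mathcomp Require Import all_boot all_order all_algebra.
Set Implicit Arguments. Unset Strict Implicit. Unset Printing Implicit Defensive.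
Import GRing.Theory Num.Theory.
Local Open Scope ring_scope.

(* Arithmetic derivative: delta(0)=0 (convention, unused), delta(1)=0,
   delta(n) = n * sum_{p^a || n} a/p = sum_{p | n} a * (n/p)  (exact in nat). *)
Definition arith_deriv (n : nat) : nat :=
  (\sum_(p <- primes n) logn p n * (n %/ p))%N.

Definition dconv (u v : nat -> int) (n : nat) : int :=
  \sum_(d <- divisors n) u d * v (n %/ d)%N.

From mathcomp Require Import all_boot all_order all_algebra all_solvable.
Set Implicit Arguments. Unset Strict Implicit. Unset Printing Implicit Defensive.
Import GRing.Theory.
Local Open Scope ring_scope.

(* Moving the last term to the left, commuting the second convolution and
   grouping the two sums over the divisors d of n, the term at d is
     d phi(d) delta(n/d) + (n/d) phi(d) delta(d) = phi(d) delta(d * (n/d)),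
   by the Leibniz rule for the arithmetic derivative.  Summing gives
   (sum_{d | n} phi(d)) delta(n) = n delta(n) by Gauss' identity. *)

(* Since logn p n = 0 for p outside primes n, the defining sum of
   arith_deriv n may be taken over any range 0 <= p < N containing n. *)
Lemma arith_deriv_iota n N : (0 < n)%N -> (n < N)%N ->
  arith_deriv n = (\sum_(p <- iota 0 N) logn p n * (n %/ p))%N.
Proof.
move=> n_gt0 lt_nN; rewrite /arith_deriv [RHS](bigID (mem (primes n))) /=.
rewrite [X in (_ + X)%N]big1 ?addn0; last first.
  by move=> p; rewrite -logn_gt0 -leqNgt leqn0 => /eqP ->.
rewrite -[in RHS]big_filter; apply/perm_big/uniq_perm.
- exact: primes_uniq.
- by rewrite filter_uniq ?iota_uniq.
move=> p; rewrite mem_filter mem_iota /= add0n andbC.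
case p_n: (p \in primes n); rewrite /= ?andbT ?andbF //.
move: p_n; rewrite mem_primes => /and3P[_ _ p_dvd_n].
by rewrite (leq_ltn_trans (dvdn_leq n_gt0 p_dvd_n) lt_nN).
Qed.

(* The summand of arith_deriv m is unchanged, up to a factor n, when m is
   replaced by m * n: it vanishes unless p divides m. *)
Lemma logn_divnMr p m n :
  (logn p m * (m * n %/ p))%N = (n * (logn p m * (m %/ p)))%N.
Proof.
have [-> | ] := posnP (logn p m); first by rewrite !mul0n muln0.
rewrite logn_gt0 mem_primes => /and3P[_ _ p_dvd_m].
by rewrite -divn_mulAC // mulnA [RHS]mulnC.
Qed.

Lemma arith_derivM m n : (0 < m)%N -> (0 < n)%N ->
  arith_deriv (m * n) = (m * arith_deriv n + n * arith_deriv m)%N.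
Proof.
move=> m_gt0 n_gt0; have mn_gt0 : (0 < m * n)%N by rewrite muln_gt0 m_gt0.
have le_m : (m < (m * n).+1)%N by rewrite ltnS leq_pmulr.
have le_n : (n < (m * n).+1)%N by rewrite ltnS leq_pmull.
rewrite (arith_deriv_iota mn_gt0 (ltnSn _)) (arith_deriv_iota m_gt0 le_m).
rewrite (arith_deriv_iota n_gt0 le_n) !big_distrr -big_split /=.
apply: eq_bigr => p _; rewrite lognM // mulnDl addnC.
by rewrite logn_divnMr [(m * n)%N]mulnC logn_divnMr.
Qed.

Lemma divnK_cofactor n d : (0 < n)%N -> (d %| n)%N -> (n %/ (n %/ d))%N = d.
Proof. by move=> n_gt0 d_dvd_n; rewrite divnA // mulKn. Qed.

Lemma perm_divisors_cofactor n : (0 < n)%N ->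
  perm_eq (divisors n) [seq (n %/ d)%N | d <- divisors n].
Proof.
move=> n_gt0; apply: uniq_perm; first exact: divisors_uniq.
  rewrite map_inj_in_uniq ?divisors_uniq // => a b.
  rewrite -!dvdn_divisors // => a_dvd_n b_dvd_n eq_ab.
  by rewrite -(divnK_cofactor n_gt0 a_dvd_n) eq_ab divnK_cofactor.
move=> d; apply/idP/mapP => [|[e]]; rewrite -!dvdn_divisors //.
  move=> d_dvd_n; exists (n %/ d)%N; last by rewrite divnK_cofactor.
  by rewrite -dvdn_divisors // dvdn_div.
by move=> e_dvd_n ->; rewrite dvdn_div.
Qed.

Lemma dconvC u v n : (0 < n)%N -> dconv u v n = dconv v u n.
Proof.
move=> n_gt0; rewrite /dconv (perm_big _ (perm_divisors_cofactor n_gt0)).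
rewrite big_map big_seq [RHS]big_seq; apply: eq_bigr => d.
by rewrite -dvdn_divisors // => d_dvd_n; rewrite divnK_cofactor // mulrC.
Qed.

Lemma sum_totient_divisors n : (0 < n)%N ->
  (\sum_(d <- divisors n) totient d)%N = n.
Proof.
move=> n_gt0; rewrite -[RHS]sum_totient_dvd -(big_mkord (dvdn^~ n)).
rewrite -[in RHS]big_filter; apply/perm_big/uniq_perm.
- exact: divisors_uniq.
- by rewrite filter_uniq ?iota_uniq.
move=> d; rewrite mem_filter mem_iota add0n -dvdn_divisors //.
by have [d_dvd_n|] //= := boolP (d %| n)%N; rewrite ltnS dvdn_leq.
Qed.

(* The divisor-wise identity behind the corollary, from the Leibniz rule
   applied to n = (n/d) * d. *)
Lemma totient_deriv_divisor n d : (0 < n)%N -> (d %| n)%N ->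
  (d * totient d * arith_deriv (n %/ d) + totient d * arith_deriv d * (n %/ d)
   = totient d * arith_deriv n)%N.
Proof.
move=> n_gt0 d_dvd_n; have d_gt0 := dvdn_gt0 n_gt0 d_dvd_n.
have nd_gt0 : (0 < n %/ d)%N by rewrite divn_gt0 // dvdn_leq.
rewrite -{3}(divnK d_dvd_n) arith_derivM // mulnDr addnC.
by rewrite -!mulnA (mulnCA d) (mulnC (arith_deriv d)).
Qed.

Theorem corollary2p7 (n : nat) : (0 < n)%N ->
  dconv (fun k => (k * totient k)%:R) (fun k => (arith_deriv k)%:R) n
  = (n * arith_deriv n)%:R
    - dconv (fun k => k%:R) (fun k => (totient k * arith_deriv k)%:R) n.
Proof.
move=> n_gt0; apply/eqP; rewrite eq_sym subr_eq; apply/eqP.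
rewrite [dconv (fun k => k%:R) _ n]dconvC // /dconv -big_split /= big_seq.
under eq_bigr => d.
  rewrite -dvdn_divisors // => d_dvd_n.
  rewrite -!natrM -natrD totient_deriv_divisor //.
  over.
by rewrite -big_seq -natr_sum -big_distrl /= sum_totient_divisors.
Qed.
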